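(* Let $A=(a_{ij})$ be an irreducible $d\times d$ matrix with entries in $\{0,1\}$, let $\rho$ be its Perron–Frobenius eigenvalue and $\mathbf v=(v_1,\dots,v_d)$ a positive probability vector with $A\mathbf v=\rho\mathbf v$. For $\mathbf z=(z_1,\dots,z_d)$ let $A(\mathbf z)$ be the matrix obtained from $A$ by replacing each entry $1$ in the $j$-th column by $z_j$. For $\mathbf q\in M_d^*=\{\mathbf q\in\mathbb R^d: q_i>0\ \forall i,\ \sum_i q_i=1\}$ define $\mathbf s(\mathbf q)=(s_1,\dots,s_d)$ by $s_j=\dfrac{q_j}{v_j\sum_{i=1}^d q_ia_{ij}/v_i}$. Then $$\det\big(I-A(\mathbf s(\mathbf q))\big)=0\quad\text{for all }\mathbf q\in M_d^*.$$
   Context: $I$ is the $d\times d$ identity matrix. *)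

From HB Require Import structures.
From mathcomp Require Import all_boot all_order all_algebra.
From mathcomp Require Import complex.
Set Implicit Arguments. Unset Strict Implicit. Unset Printing Implicit Defensive.
Import Order.TTheory GRing.Theory Num.Theory.
Local Open Scope ring_scope.

Definition mxpow (R : pzRingType) (d : nat) (A : 'M[R]_d) (k : nat) : 'M[R]_d :=
  iter k (mulmx A) 1%:M.

Definition zero_one_mx (R : pzRingType) (d : nat) (A : 'M[R]_d) : Prop :=
  forall i j, A i j = 0 \/ A i j = 1.

Definition irreducible_mx (R : numDomainType) (d : nat) (A : 'M[R]_d) : Prop :=
  (forall i j, 0 <= A i j) /\
  forall i j : 'I_d, exists k : nat, 0 < mxpow A k.+1 i j.

(* rho is the Perron--Frobenius eigenvalue of A: a real eigenvalue of A
   equal to the spectral radius (all complex eigenvalues have modulus <= rho). *)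
Definition pf_eigenvalue (R : rcfType) (d : nat) (A : 'M[R]_d) (rho : R) : Prop :=
  eigenvalue A rho /\
  forall lam : R[i],
    root (char_poly (map_mx (fun x : R => (x%:C)%C) A)) lam -> `|lam| <= (rho%:C)%C.

Definition Az (R : pzRingType) (d : nat) (A : 'M[R]_d) (z : 'I_d -> R) : 'M[R]_d :=
  \matrix_(i, j) (if A i j == 1 then z j else A i j).

Definition s_of (R : fieldType) (d : nat) (A : 'M[R]_d) (v q : 'I_d -> R) : 'I_d -> R :=
  fun j => q j / (v j * \sum_(i < d) q i * A i j / v i).

Definition open_simplex (R : numDomainType) (d : nat) (q : 'I_d -> R) : Prop :=
  (forall i, 0 < q i) /\ \sum_(i < d) q i = 1.

From HB Require Import structures.
From mathcomp Require Import all_boot all_order all_algebra.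
Set Implicit Arguments. Unset Strict Implicit. Unset Printing Implicit Defensive.
Import Order.TTheory GRing.Theory Num.Theory.
Local Open Scope ring_scope.

(* The row vector x with x_i = q_i / v_i is a left fixed vector of A(s(q)).
   For a 0/1 matrix, A(z) = A diag(z), and s_j is precisely x_j divided by
   (x A)_j, which is positive because irreducibility leaves no zero column.
   So x A(s(q)) = x with x <> 0, and 1 - A(s(q)) is singular.  Of the data
   (rho, v) only the positivity of v matters. *)

Lemma mxpowSr (R : pzRingType) (d : nat) (A : 'M[R]_d) (k : nat) :
  mxpow A k.+1 = mxpow A k *m A.
Proof.
elim: k => [|k IHk]; first by rewrite /mxpow /= mulmx1 mul1mx.
change (A *m mxpow A k.+1 = mxpow A k.+1 *m A).
by rewrite {1}IHk mulmxA.
Qed.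

Lemma Az_zero_one (R : nzRingType) (d : nat) (A : 'M[R]_d) (z : 'I_d -> R) :
  zero_one_mx A -> Az A z = A *m diag_mx (\row_j z j).
Proof.
move=> A01; rewrite mul_mx_diag; apply/matrixP => i j; rewrite !mxE.
by case: (A01 i j) => ->; rewrite ?eqxx 1?eq_sym ?oner_eq0 ?mul0r ?mul1r.
Qed.

Lemma irreducible_col_pos (R : numDomainType) (d : nat) (A : 'M[R]_d) :
  irreducible_mx A -> forall j, exists i, 0 < A i j.
Proof.
move=> [A_ge0 A_irr] j; have [i Aij_gt0|A0] := pickP (fun i => 0 < A i j).
  by exists i.
have [k] := A_irr j j; rewrite mxpowSr mxE big1 ?ltxx // => i _.
suff -> : A i j = 0 by rewrite mulr0.
by move: (A0 i); rewrite lt_def A_ge0 andbT => /negbFE/eqP.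
Qed.

Lemma weighted_col_sum_gt0 (R : numDomainType) (d : nat) (A : 'M[R]_d)
    (w : 'I_d -> R) (j : 'I_d) :
  (forall i, 0 < w i) -> irreducible_mx A -> 0 < \sum_i w i * A i j.
Proof.
move=> w_gt0 A_irr; have [l Alj_gt0] := irreducible_col_pos A_irr j.
have wA_ge0 i : 0 <= w i * A i j := mulr_ge0 (ltW (w_gt0 i)) (A_irr.1 i j).
rewrite lt_def psumr_neq0 ?sumr_ge0 // andbT.
by apply/hasP; exists l; rewrite ?mem_index_enum ?mulr_gt0.
Qed.

Lemma mulmx_diag_fixed (R : pzSemiRingType) (d : nat) (x : 'rV[R]_d)
    (M : 'M[R]_d) (s : 'I_d -> R) :
  (forall j, (x *m M) 0 j * s j = x 0 j) ->
  x *m (M *m diag_mx (\row_j s j)) = x.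
Proof.
by move=> Hs; rewrite mulmxA mul_mx_diag; apply/rowP => j; rewrite -[RHS]Hs !mxE.
Qed.

Lemma det1B_eq0 (R : idomainType) (d : nat) (x : 'rV[R]_d) (M : 'M[R]_d) :
  x != 0 -> x *m M = x -> \det (1%:M - M) = 0.
Proof.
move=> x_neq0 xM; apply/eqP/det0P; exists x => //.
by rewrite mulmxBr mulmx1 xM subrr.
Qed.

Theorem corollary2 (R : rcfType) (d : nat) (A : 'M[R]_d) (rho : R)
  (v : 'I_d -> R) :
  zero_one_mx A ->
  irreducible_mx A ->
  pf_eigenvalue A rho ->
  open_simplex v ->
  A *m (\col_i v i) = rho *: (\col_i v i) ->
  forall q : 'I_d -> R, open_simplex q ->
    \det (1%:M - Az A (s_of A v q)) = 0.
Proof.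
move=> A01 A_irr _ [v_gt0 _] _ q [q_gt0 q_sum].
pose x := \row_i (q i / v i).
have x_neq0 : x != 0.
  apply/eqP => /rowP x0; move: q_sum; rewrite big1 => [/esym/eqP|i _].
    by rewrite oner_eq0.
  have /eqP := x0 i; rewrite !mxE mulf_eq0 invr_eq0 (gt_eqF (v_gt0 i)) orbF.
  by move/eqP.
apply: (det1B_eq0 x_neq0); rewrite Az_zero_one //; apply: mulmx_diag_fixed => j.
have xAj : (x *m A) 0 j = \sum_i q i * A i j / v i.
  by rewrite mxE; apply: eq_bigr => i _; rewrite mxE mulrAC.
have xAj_neq0 : (x *m A) 0 j != 0.
  by rewrite mxE gt_eqF // weighted_col_sum_gt0 // => i; rewrite mxE divr_gt0.
by rewrite /s_of -xAj mulrC invfM mulrA mulfVK // mxE.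
Qed.
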